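(* Let $\mathcal{T}$ be the scheme on $\mathcal{M}$ given by $$\mathcal{T}(\mathbf{p})_{2i}=M_{1/2}\big(M_{3/4}(p_{i-1},p_i),\,M_{1/4}(p_i,p_{i+1})\big),\qquad \mathcal{T}(\mathbf{p})_{2i+1}=M_{1/2}(p_i,p_{i+1}),\quad i\in\mathbb{Z}.$$ Then $\delta(\mathcal{T}(\mathbf{p}))\le\tfrac12\,\delta(\mathbf{p})$ for all manifold data $\mathbf{p}$, and $\mathcal{T}$ is convergent.
   Context: $\mathcal{M}$ is a geodesically complete connected Riemannian manifold with distance $d$. For $p_0,p_1\in\mathcal{M}$ a minimal geodesic $\gamma:[0,1]\to\mathcal{M}$ from $p_0$ to $p_1$ is fixed and $M_t(p_0,p_1)=\gamma(t)$, $t\in[0,1]$, so all $M_t(p_0,p_1)$ lie on the same geodesic and $d(M_s(p_0,p_1),M_t(p_0,p_1))=|s-t|d(p_0,p_1)$. Data $\mathbf{p}=(p_i)_{i\in\mathbb{Z}}$ with $\delta(\mathbf{p})=\sup_id(p_i,p_{i+1})<\infty$. This is the adaptation via the symmetric geodesic inductive mean of the linear cubic B-spline scheme with mask $\frac18(1,4,6,4,1)$. Convergence: for every data $\mathbf{p}$ the curves $\mathrm{PG}_k(\mathcal{T}^k(\mathbf{p}))$ converge uniformly on $\mathbb{R}$, where $\mathrm{PG}_k(\mathbf{q})(t)=M_{2^kt-n}(q_n,q_{n+1})$ for $t\in[2^{-k}n,2^{-k}(n+1))$. *)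

From Stdlib Require Import Reals Lra ZArith.
Open Scope R_scope.

(* Abstract setting: (X,d) is the metric space of a geodesically complete
   connected Riemannian manifold; by Hopf-Rinow it is a complete metric space.
   M t p0 p1 is the point gamma(t) of a fixed minimal geodesic
   gamma : [0,1] -> X from p0 to p1. *)
Record geodesic_mean_space (X : Type) (d : X -> X -> R) (M : R -> X -> X -> X)
  : Prop := {
  gms_nonneg : forall x y, 0 <= d x y;
  gms_sep : forall x y, d x y = 0 <-> x = y;
  gms_sym : forall x y, d x y = d y x;
  gms_tri : forall x y z, d x z <= d x y + d y z;
  gms_complete : forall u : nat -> X,
      (forall eps, 0 < eps -> exists N, forall m n, (N <= m)%nat -> (N <= n)%nat ->
          d (u m) (u n) < eps) ->
      exists l, forall eps, 0 < eps -> exists N, forall n, (N <= n)%nat -> d (u n) l < eps;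
  gms_M0 : forall p q, M 0 p q = p;
  gms_M1 : forall p q, M 1 p q = q;
  gms_geod : forall p q s t, 0 <= s <= 1 -> 0 <= t <= 1 ->
      d (M s p q) (M t p q) = Rabs (s - t) * d p q
}.

Definition consec_dists {X : Type} (d : X -> X -> R) (p : Z -> X) : R -> Prop :=
  fun r => exists i : Z, r = d (p i) (p (i + 1)%Z).

Definition is_delta {X : Type} (d : X -> X -> R) (p : Z -> X) (D : R) : Prop :=
  is_lub (consec_dists d p) D.

Definition bounded_data {X : Type} (d : X -> X -> R) (p : Z -> X) : Prop :=
  exists B, forall i : Z, d (p i) (p (i + 1)%Z) <= B.

(* The scheme T (j / 2 is floor division on Z) *)
Definition schemeT {X : Type} (M : R -> X -> X -> X) (p : Z -> X) : Z -> X :=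
  fun j => let i := (j / 2)%Z in
    if Z.even j
    then M (1/2) (M (3/4) (p (i - 1)%Z) (p i)) (M (1/4) (p i) (p (i + 1)%Z))
    else M (1/2) (p i) (p (i + 1)%Z).

Definition PG {X : Type} (M : R -> X -> X -> X) (k : nat) (q : Z -> X) (t : R) : X :=
  let n := Int_part (2 ^ k * t) in
  M (2 ^ k * t - IZR n) (q n) (q (n + 1)%Z).

(* A point of T(p) lies within delta(p) of its parent p_{j/2}, and a point of
   PG_k(q) within delta(q) of q_{floor(2^k t)}.  Since refining by one level
   divides the parent index by two, PG_{k+1}(T q)(t) and PG_k(q)(t) are both
   close to q_{floor(2^k t)}: their distance is at most 3 delta(q).  Applied to
   q = T^k p, whose delta is at most 2^-k delta(p) by the contraction property,
   the polygons form a uniformly Cauchy sequence, which converges by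
   completeness of the manifold. *)
From Stdlib Require Import Reals ZArith Lra Lia ClassicalEpsilon.
Open Scope R_scope.

Lemma Int_part_double x :
  Int_part (2 * x) = (2 * Int_part x)%Z \/ Int_part (2 * x) = (2 * Int_part x + 1)%Z.
Proof.
  destruct (base_Int_part x) as [Hx1 Hx2].
  destruct (base_Int_part (2 * x)) as [H2x1 H2x2].
  assert (Hlow : (2 * Int_part x < Int_part (2 * x) + 1)%Z).
  { apply lt_IZR. rewrite plus_IZR, mult_IZR. simpl. lra. }
  assert (Hhigh : (Int_part (2 * x) < 2 * Int_part x + 2)%Z).
  { apply lt_IZR. rewrite plus_IZR, mult_IZR. simpl. lra. }
  lia.
Qed.

Lemma Int_part_double_div2 x : (Int_part (2 * x) / 2)%Z = Int_part x.
Proof.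
  destruct (Int_part_double x) as [-> | ->];
    Z.to_euclidean_division_equations; lia.
Qed.

Lemma Z_even_or_odd (j : Z) : exists i, (j = 2 * i \/ j = 2 * i + 1)%Z.
Proof. exists (j / 2)%Z. Z.to_euclidean_division_equations; lia. Qed.

Lemma geometric_tail_small A r : 0 <= A -> 0 <= r < 1 ->
  forall eps, 0 < eps -> exists N, forall n, (N <= n)%nat -> A * r ^ n < eps.
Proof.
  intros HA Hr eps Heps.
  assert (Hy : 0 < eps / (A + 1)) by (apply Rdiv_lt_0_compat; lra).
  destruct (pow_lt_1_zero r ltac:(rewrite Rabs_pos_eq; lra) _ Hy) as [N HN].
  exists N. intros n Hn. specialize (HN n Hn).
  assert (Hpow : 0 <= r ^ n) by (apply pow_le; lra).
  rewrite Rabs_pos_eq in HN by exact Hpow.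
  assert (E : (A + 1) * (eps / (A + 1)) = eps) by (field; lra).
  nra.
Qed.

Lemma schemeT_even X (M : R -> X -> X -> X) q i :
  schemeT M q (2 * i)%Z
  = M (1/2) (M (3/4) (q (i - 1)%Z) (q i)) (M (1/4) (q i) (q (i + 1)%Z)).
Proof.
  unfold schemeT. replace (2 * i / 2)%Z with i by (Z.to_euclidean_division_equations; lia).
  now rewrite Z.even_mul.
Qed.

Lemma schemeT_odd X (M : R -> X -> X -> X) q i :
  schemeT M q (2 * i + 1)%Z = M (1/2) (q i) (q (i + 1)%Z).
Proof.
  unfold schemeT. replace ((2 * i + 1) / 2)%Z with i by (Z.to_euclidean_division_equations; lia).
  now rewrite Z.even_add, Z.even_mul.
Qed.

Section GeodesicMeanSpace.

Variables (X : Type) (d : X -> X -> R) (M : R -> X -> X -> X).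
Hypothesis HX : geodesic_mean_space X d M.

Let dist_nonneg := gms_nonneg _ _ _ HX.
Let dist_sym := gms_sym _ _ _ HX.
Let dist_triangle := gms_tri _ _ _ HX.

Lemma dist_mean_left p q s : 0 <= s <= 1 -> d (M s p q) p = s * d p q.
Proof.
  intros Hs. rewrite <- (gms_M0 _ _ _ HX p q) at 2.
  rewrite (gms_geod _ _ _ HX) by lra.
  rewrite Rminus_0_r, Rabs_pos_eq; lra.
Qed.

Lemma dist_mean_right p q s : 0 <= s <= 1 -> d (M s p q) q = (1 - s) * d p q.
Proof.
  intros Hs. rewrite <- (gms_M1 _ _ _ HX p q) at 2.
  rewrite (gms_geod _ _ _ HX) by lra.
  rewrite Rabs_minus_sym, Rabs_pos_eq; lra.
Qed.

Section BoundedSteps.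

Variables (q : Z -> X) (C : R).
Hypothesis Hq : forall i, d (q i) (q (i + 1)%Z) <= C.

Lemma dist_schemeT_even_succ i :
  d (schemeT M q (2 * i)%Z) (schemeT M q (2 * i + 1)%Z) <= C / 2.
Proof.
  rewrite schemeT_even, schemeT_odd.
  set (a := M (3/4) (q (i - 1)%Z) (q i)).
  set (b := M (1/4) (q i) (q (i + 1)%Z)).
  assert (Hab : d (M (1/2) a b) b = (1 - 1/2) * d a b) by (apply dist_mean_right; lra).
  assert (Hbm : d b (M (1/2) (q i) (q (i + 1)%Z)) = Rabs (1/4 - 1/2) * d (q i) (q (i + 1)%Z))
    by (apply (gms_geod _ _ _ HX); lra).
  rewrite Rabs_left1 in Hbm by lra.
  assert (Ha : d a (q i) = (1 - 3/4) * d (q (i - 1)%Z) (q i)) by (apply dist_mean_right; lra).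
  assert (Hb : d b (q i) = 1/4 * d (q i) (q (i + 1)%Z)) by (apply dist_mean_left; lra).
  assert (Hprev := Hq (i - 1)%Z). rewrite Z.sub_add in Hprev.
  assert (Hcur := Hq i).
  assert (T1 := dist_triangle (M (1/2) a b) b (M (1/2) (q i) (q (i + 1)%Z))).
  assert (T2 := dist_triangle a (q i) b). rewrite (dist_sym (q i) b) in T2.
  lra.
Qed.

Lemma dist_schemeT_odd_succ i :
  d (schemeT M q (2 * i + 1)%Z) (schemeT M q (2 * (i + 1))%Z) <= C / 2.
Proof.
  rewrite schemeT_odd, schemeT_even. replace (i + 1 - 1)%Z with i by ring.
  set (a := M (3/4) (q i) (q (i + 1)%Z)).
  set (b := M (1/4) (q (i + 1)%Z) (q (i + 1 + 1)%Z)).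
  set (m := M (1/2) (q i) (q (i + 1)%Z)).
  assert (Hma : d m a = Rabs (1/2 - 3/4) * d (q i) (q (i + 1)%Z))
    by (apply (gms_geod _ _ _ HX); lra).
  rewrite Rabs_left1 in Hma by lra.
  assert (Hab : d (M (1/2) a b) a = 1/2 * d a b) by (apply dist_mean_left; lra).
  assert (Ha : d a (q (i + 1)%Z) = (1 - 3/4) * d (q i) (q (i + 1)%Z))
    by (apply dist_mean_right; lra).
  assert (Hb : d b (q (i + 1)%Z) = 1/4 * d (q (i + 1)%Z) (q (i + 1 + 1)%Z))
    by (apply dist_mean_left; lra).
  assert (Hnext := Hq (i + 1)%Z). assert (Hcur := Hq i).
  assert (T1 := dist_triangle m a (M (1/2) a b)).
  rewrite (dist_sym a (M (1/2) a b)) in T1.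
  assert (T2 := dist_triangle a (q (i + 1)%Z) b). rewrite (dist_sym (q (i + 1)%Z) b) in T2.
  lra.
Qed.

Lemma dist_schemeT_succ j : d (schemeT M q j) (schemeT M q (j + 1)%Z) <= C / 2.
Proof.
  destruct (Z_even_or_odd j) as [i [-> | ->]].
  - apply dist_schemeT_even_succ.
  - replace (2 * i + 1 + 1)%Z with (2 * (i + 1))%Z by ring.
    apply dist_schemeT_odd_succ.
Qed.

Lemma dist_schemeT_parent j : d (schemeT M q j) (q (j / 2)%Z) <= C.
Proof.
  destruct (Z_even_or_odd j) as [i [-> | ->]].
  - rewrite schemeT_even. replace (2 * i / 2)%Z with i by (Z.to_euclidean_division_equations; lia).
    set (a := M (3/4) (q (i - 1)%Z) (q i)).
    set (b := M (1/4) (q i) (q (i + 1)%Z)).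
    assert (Hab : d (M (1/2) a b) b = (1 - 1/2) * d a b) by (apply dist_mean_right; lra).
    assert (Ha : d a (q i) = (1 - 3/4) * d (q (i - 1)%Z) (q i)) by (apply dist_mean_right; lra).
    assert (Hb : d b (q i) = 1/4 * d (q i) (q (i + 1)%Z)) by (apply dist_mean_left; lra).
    assert (Hprev := Hq (i - 1)%Z). rewrite Z.sub_add in Hprev.
    assert (Hcur := Hq i).
    assert (T1 := dist_triangle (M (1/2) a b) b (q i)).
    assert (T2 := dist_triangle a (q i) b). rewrite (dist_sym (q i) b) in T2.
    assert (P1 := dist_nonneg (q i) (q (i + 1)%Z)). assert (P2 := dist_nonneg a b).
    lra.
  - rewrite schemeT_odd. replace ((2 * i + 1) / 2)%Z with i by (Z.to_euclidean_division_equations; lia).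
    rewrite dist_mean_left by lra.
    assert (Hcur := Hq i). assert (P := dist_nonneg (q i) (q (i + 1)%Z)). lra.
Qed.

End BoundedSteps.

Lemma dist_PG_node q C : (forall i, d (q i) (q (i + 1)%Z) <= C) ->
  forall k t, d (PG M k q t) (q (Int_part (2 ^ k * t))) <= C.
Proof.
  intros Hq k t. unfold PG. set (x := 2 ^ k * t).
  destruct (base_Int_part x) as [Hx1 Hx2].
  rewrite dist_mean_left by lra.
  assert (Hcur := Hq (Int_part x)).
  assert (P := dist_nonneg (q (Int_part x)) (q (Int_part x + 1)%Z)).
  nra.
Qed.

Lemma dist_PG_refine q C : (forall i, d (q i) (q (i + 1)%Z) <= C) ->
  forall k t, d (PG M (S k) (schemeT M q) t) (PG M k q t) <= 3 * C.
Proof.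
  intros Hq k t.
  set (n := Int_part (2 ^ S k * t)).
  assert (Hfine := dist_PG_node _ _ (dist_schemeT_succ q C Hq) (S k) t).
  assert (Hcoarse := dist_PG_node _ _ Hq k t).
  assert (Hparent := dist_schemeT_parent q C Hq n).
  replace (n / 2)%Z with (Int_part (2 ^ k * t)) in Hparent.
  2:{ unfold n. replace (2 ^ S k * t) with (2 * (2 ^ k * t)) by (simpl; ring).
      now rewrite Int_part_double_div2. }
  fold n in Hfine.
  assert (T1 := dist_triangle (PG M (S k) (schemeT M q) t) (schemeT M q n) (PG M k q t)).
  assert (T2 := dist_triangle (schemeT M q n) (q (Int_part (2 ^ k * t))) (PG M k q t)).
  rewrite (dist_sym (q _) (PG M k q t)) in T2.
  assert (HC := Rle_trans _ _ _ (dist_nonneg _ _) (Hq 0%Z)).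
  lra.
Qed.

Lemma dist_iter_schemeT_succ p B : (forall i, d (p i) (p (i + 1)%Z) <= B) ->
  forall k i, d (Nat.iter k (schemeT M) p i) (Nat.iter k (schemeT M) p (i + 1)%Z)
              <= B * (/2) ^ k.
Proof.
  intros Hp k. induction k as [|k IH]; intros i.
  - simpl. rewrite Rmult_1_r. apply Hp.
  - replace (B * (/2) ^ S k) with (B * (/2) ^ k / 2) by (simpl; field).
    exact (dist_schemeT_succ _ _ IH i).
Qed.

Lemma is_delta_schemeT p D : is_delta d p D ->
  exists D', is_delta d (schemeT M p) D' /\ D' <= D / 2.
Proof.
  intros [HubD _].
  assert (Hstep : forall j, d (schemeT M p j) (schemeT M p (j + 1)%Z) <= D / 2).
  { apply dist_schemeT_succ. intro i. apply HubD. now exists i. }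
  destruct (completeness (consec_dists d (schemeT M p))) as [D' HD'].
  - exists (D / 2). intros r [j ->]. apply Hstep.
  - now exists (d (schemeT M p 0%Z) (schemeT M p (0 + 1)%Z)), 0%Z.
  - exists D'. split; [exact HD'|]. apply (proj2 HD'). intros r [j ->]. apply Hstep.
Qed.

Section GeometricSteps.

Variables (g : nat -> R -> X) (C r : R).
Hypotheses (Hr : 0 <= r < 1) (Hg : forall k t, d (g (S k) t) (g k t) <= C * r ^ k).

Lemma dist_geometric_tail n m t : (n <= m)%nat -> d (g m t) (g n t) <= C * r ^ n / (1 - r).
Proof.
  intros Hnm. replace m with (n + (m - n))%nat by lia.
  assert (Htele : forall j, d (g (n + j)%nat t) (g n t) <= C * (r ^ n - r ^ (n + j)) / (1 - r)).
  { induction j as [|j IH].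
    - rewrite Nat.add_0_r, (proj2 (gms_sep _ _ _ HX _ _) eq_refl), Rminus_diag.
      unfold Rdiv. lra.
    - rewrite Nat.add_succ_r.
      assert (T := dist_triangle (g (S (n + j)) t) (g (n + j)%nat t) (g n t)).
      assert (Hstep := Hg (n + j)%nat t).
      apply (Rmult_le_reg_r (1 - r)); [lra|].
      unfold Rdiv in *. rewrite Rmult_assoc, Rinv_l by lra.
      apply (Rmult_le_compat_r (1 - r)) in IH; [|lra].
      rewrite Rmult_assoc, Rinv_l in IH by lra.
      simpl pow. nra. }
  assert (HC : 0 <= C).
  { assert (H0 := Hg 0%nat t). assert (P := dist_nonneg (g 1%nat t) (g 0%nat t)). simpl in H0. lra. }
  eapply Rle_trans; [apply Htele|].
  apply Rmult_le_compat_r; [apply Rlt_le, Rinv_0_lt_compat; lra|].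
  assert (P := pow_le r (n + (m - n)) (proj1 Hr)). nra.
Qed.

End GeometricSteps.

Lemma uniform_limit_of_geometric_steps (g : nat -> R -> X) C r : 0 <= r < 1 ->
  (forall k t, d (g (S k) t) (g k t) <= C * r ^ k) ->
  exists f : R -> X, forall eps, 0 < eps ->
    exists K, forall k, (K <= k)%nat -> forall t, d (g k t) (f t) < eps.
Proof.
  intros Hr Hg.
  assert (HA : 0 <= C / (1 - r)).
  { assert (H0 := Hg 0%nat 0). assert (P := dist_nonneg (g 1%nat 0) (g 0%nat 0)).
    simpl in H0. apply Rmult_le_pos; [lra | apply Rlt_le, Rinv_0_lt_compat; lra]. }
  assert (Htail : forall eps, 0 < eps -> exists N, forall n m t, (N <= n)%nat -> (n <= m)%nat ->
            d (g m t) (g n t) < eps).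
  { intros eps Heps. destruct (geometric_tail_small _ r HA Hr eps Heps) as [N HN].
    exists N. intros n m t Hn Hnm.
    eapply Rle_lt_trans; [exact (dist_geometric_tail g C r Hr Hg n m t Hnm)|].
    replace (C * r ^ n / (1 - r)) with (C / (1 - r) * r ^ n) by (field; lra).
    now apply HN. }
  assert (Hcauchy : forall t, exists l, forall eps, 0 < eps ->
            exists N, forall n, (N <= n)%nat -> d (g n t) l < eps).
  { intro t. apply (gms_complete _ _ _ HX). intros eps Heps.
    destruct (Htail eps Heps) as [N HN]. exists N. intros m n Hm Hn.
    destruct (Nat.le_ge_cases n m) as [Hnm | Hmn].
    - now apply HN.
    - rewrite dist_sym. now apply HN. }
  exists (fun t => proj1_sig (constructive_indefinite_description _ (Hcauchy t))).
  intros eps Heps.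
  destruct (Htail (eps / 2) ltac:(lra)) as [K HK].
  exists K. intros k Hk t.
  destruct (constructive_indefinite_description _ (Hcauchy t)) as [l Hl]. simpl.
  destruct (Hl (eps / 2) ltac:(lra)) as [N HN].
  assert (Hfar := HN (Nat.max k N) ltac:(lia)).
  assert (Hnear := HK k (Nat.max k N) t Hk ltac:(lia)).
  assert (T := dist_triangle (g k t) (g (Nat.max k N) t) l).
  rewrite (dist_sym (g k t) (g (Nat.max k N) t)) in T.
  lra.
Qed.

End GeodesicMeanSpace.

Theorem mainTheorem10 (X : Type) (d : X -> X -> R) (M : R -> X -> X -> X)
  (HX : geodesic_mean_space X d M) :
  (forall (p : Z -> X) (D : R), bounded_data d p -> is_delta d p D ->
     exists D' : R, is_delta d (schemeT M p) D' /\ D' <= D / 2)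
  /\
  (forall p : Z -> X, bounded_data d p ->
     exists f : R -> X, forall eps : R, 0 < eps ->
       exists K : nat, forall k : nat, (K <= k)%nat -> forall t : R,
         d (PG M k (Nat.iter k (schemeT M) p) t) (f t) < eps).
Proof.
  split.
  - intros p D _. exact (is_delta_schemeT X d M HX p D).
  - intros p [B Hp].
    apply (uniform_limit_of_geometric_steps X d M HX
             (fun k t => PG M k (Nat.iter k (schemeT M) p) t) (3 * B) (/2));
      [lra|].
    intros k t.
    rewrite Rmult_assoc.
    exact (dist_PG_refine X d M HX _ _ (dist_iter_schemeT_succ X d M HX p B Hp k) k t).
Qed.
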